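(* Let $m$ and $n$ be positive integers and let $\alpha$ be a real number. Define \[ p_{m}(X) = \sum_{\nu=0}^{m} \binom{m-\alpha}{m-\nu}\binom{n+\alpha}{\nu} X^{\nu}, \qquad q_{n}(X) = \sum_{\nu=0}^{n} \binom{m-\alpha}{\nu}\binom{n+\alpha}{n-\nu} X^{\nu}. \] Given a complex number $x$, let $C$ denote the straight line segment from $1$ to $x$. If $0$ is not on $C$, then \[ x^{\alpha} q_{n}(x) - p_{m}(x) = \alpha \binom{m-\alpha}{m}\binom{n+\alpha}{n} \int_{C} (t-x)^{m}(1-t)^{n} t^{\alpha-m-1}\, dt. \]
   Context: For a real number $y$ and a nonnegative integer $k$, $\binom{y}{k} = y(y-1)\cdots(y-k+1)/k!$. Complex powers $x^{\alpha}$ and $t^{\alpha-m-1}$ are taken with the principal branch of the logarithm (which is continuous along $C$ when $0 \notin C$). *)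

From Stdlib Require Import Reals Factorial.
From Coquelicot Require Import Coquelicot.
Open Scope R_scope.

Fixpoint fallR (y : R) (k : nat) : R :=
  match k with O => 1 | S k' => fallR y k' * (y - INR k') end.
Definition binomR (y : R) (k : nat) : R := fallR y k / INR (fact k).

(* principal argument, in (-PI, PI] *)
Definition Arg (z : C) : R :=
  let a := Re z in let b := Im z in
  if Rlt_dec 0 a then atan (b / a)
  else if Rlt_dec a 0 then
         (if Rle_dec 0 b then atan (b / a) + PI else atan (b / a) - PI)
  else if Rlt_dec 0 b then PI / 2
  else if Rlt_dec b 0 then - (PI / 2) else 0.

(* principal power z^alpha = exp(alpha * Log z), Log z = ln|z| + i Arg z, z <> 0 *)
Definition Cpowr (z : C) (alpha : R) : C :=
  (exp (alpha * ln (Cmod z)) * cos (alpha * Arg z),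
   exp (alpha * ln (Cmod z)) * sin (alpha * Arg z)).

Fixpoint Cnpow (z : C) (n : nat) : C :=
  match n with O => RtoC 1 | S n' => Cmult z (Cnpow z n') end.

Fixpoint Csum (f : nat -> C) (N : nat) : C :=
  match N with O => f O | S N' => Cplus (Csum f N') (f N) end.

Definition p_poly (m n : nat) (alpha : R) (X : C) : C :=
  Csum (fun nu => Cmult (RtoC (binomR (INR m - alpha) (m - nu) *
                                binomR (INR n + alpha) nu)) (Cnpow X nu)) m.

Definition q_poly (m n : nat) (alpha : R) (X : C) : C :=
  Csum (fun nu => Cmult (RtoC (binomR (INR m - alpha) nu *
                                binomR (INR n + alpha) (n - nu))) (Cnpow X nu)) n.

Definition seg (x : C) (s : R) : C := Cplus (RtoC 1) (Cmult (RtoC s) (Cminus x (RtoC 1))).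

(* contour integral of f along the segment from 1 to x :
   int_0^1 f(1 + s (x-1)) (x-1) ds *)
Definition seg_integral (f : C -> C) (x : C) : C :=
  RInt (V := C_R_CompleteNormedModule)
       (fun s => Cmult (f (seg x s)) (Cminus x (RtoC 1))) 0 1.

From Stdlib Require Import Reals Lra Lia Factorial.
From Coquelicot Require Import Coquelicot.
Open Scope R_scope.

(* Fix the exponent [beta = alpha - m - 1] of the integrand, put [w = x - 1] and follow
   [z = 1 + r w] along the segment.  For each order [k] let [alpha_k = beta + k + 1],
   [E_k(r) = z^alpha_k q_k(z) - p_k(z)] and [J_k(r) = int_1^z (t - z)^k (1 - t)^n t^beta dt].
   Both vanish at [r = 0]: [J_k] trivially, [E_k] because [p_k(1) = q_k(1) = binom(k + n, k)]
   by Vandermonde.  In [r], [E_0' = K_0 J_0'] since [alpha_0 q_0 + z q_0'] is a multiple of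
   [(1 - z)^n], and contiguity of the binomial coefficients gives
   [E_(k+1)' = (n + alpha_(k+1)) w E_k], while [J_(k+1)' = -(k+1) w J_k].  The constants
   [K_k = alpha_k binom(k - alpha_k, k) binom(n + alpha_k, n)] satisfy
   [(n + alpha_(k+1)) K_k = -(k+1) K_(k+1)], so induction on [k] gives [E_k = K_k J_k] on
   [[0, 1]]; [r = 1] is the theorem. *)

(** * Real binomial coefficients *)

Lemma fallR_succ_l y k : fallR y (S k) = y * fallR (y - 1) k.
Proof.
  revert y; induction k as [|k IH]; intro y; [simpl; ring|].
  change (fallR y (S (S k))) with (fallR y (S k) * (y - INR (S k))).
  change (fallR (y - 1) (S k)) with (fallR (y - 1) k * (y - 1 - INR k)).
  rewrite IH, S_INR; ring.
Qed.

Lemma fallR_add y a b : fallR y (a + b) = fallR y a * fallR (y - INR a) b.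
Proof.
  induction b as [|b IH]; [rewrite Nat.add_0_r; simpl; ring|].
  rewrite Nat.add_succ_r; simpl; rewrite IH, plus_INR; ring.
Qed.

Lemma fallR_opp z k : fallR (- z) k = (-1) ^ k * fallR (z + INR k - 1) k.
Proof.
  revert z; induction k as [|k IH]; intro z; [simpl; ring|].
  rewrite (fallR_succ_l (z + INR (S k) - 1) k).
  change (fallR (- z) (S k)) with (fallR (- z) k * (- z - INR k)).
  rewrite IH; replace (z + INR (S k) - 1 - 1) with (z + INR k - 1) by (rewrite S_INR; ring).
  rewrite S_INR; simpl pow; ring.
Qed.

Lemma fallR_nat N k : (k <= N)%nat -> fallR (INR N) k = INR (fact N) / INR (fact (N - k)).
Proof.
  induction k as [|k IH]; intro Hk; [simpl; rewrite Nat.sub_0_r; field; apply INR_fact_neq_0|].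
  simpl fallR; rewrite IH by lia.
  replace (N - k)%nat with (S (N - S k)) by lia.
  change (fact (S (N - S k))) with (S (N - S k) * fact (N - S k))%nat.
  rewrite mult_INR, S_INR, minus_INR by lia; rewrite S_INR.
  field; split; [apply INR_fact_neq_0|]. rewrite <- S_INR, <- minus_INR by lia.
  rewrite <- S_INR; apply not_0_INR; lia.
Qed.

Lemma INR_fact_succ k : INR (fact (S k)) = INR (S k) * INR (fact k).
Proof. now rewrite <- mult_INR. Qed.

Lemma binomR_0 y : binomR y 0 = 1.
Proof. unfold binomR; simpl; field. Qed.

Lemma binomR_succ y k : INR (S k) * binomR y (S k) = (y - INR k) * binomR y k.
Proof.
  unfold binomR; rewrite INR_fact_succ; simpl fallR.
  field; split; [apply INR_fact_neq_0 | apply not_0_INR; lia].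
Qed.

Lemma binomR_succ_absorb y k : INR (S k) * binomR y (S k) = y * binomR (y - 1) k.
Proof.
  unfold binomR; rewrite fallR_succ_l, INR_fact_succ.
  field; split; [apply INR_fact_neq_0 | apply not_0_INR; lia].
Qed.

Lemma binomR_sub_absorb y k : (y - INR k) * binomR y k = y * binomR (y - 1) k.
Proof. now rewrite <- binomR_succ, binomR_succ_absorb. Qed.

Lemma binomR_pascal y k : binomR (y + 1) (S k) = binomR y (S k) + binomR y k.
Proof.
  unfold binomR; rewrite fallR_succ_l, INR_fact_succ, S_INR.
  replace (y + 1 - 1) with y by ring; simpl fallR.
  field; split; [apply INR_fact_neq_0 | pose proof (pos_INR k); lra].
Qed.

Lemma binomR_vandermonde a b N :
  sum_f_R0 (fun v => binomR a v * binomR b (N - v)) N = binomR (a + b) N.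
Proof.
  revert a b; induction N as [|N IH]; intros a b; [simpl; rewrite !binomR_0; ring|].
  apply Rmult_eq_reg_l with (INR (S N)); [|apply not_0_INR; lia].
  rewrite binomR_succ_absorb.
  (* split the weight N + 1 as v + (N + 1 - v) *)
  transitivity (sum_f_R0 (fun v => INR v * binomR a v * binomR b (S N - v)) (S N)
              + sum_f_R0 (fun v => INR (S N - v) * binomR a v * binomR b (S N - v)) (S N)).
  { rewrite scal_sum, <- plus_sum; apply sum_eq; intros v Hv.
    rewrite minus_INR by lia; ring. }
  rewrite Rmult_plus_distr_r; f_equal.
  - replace (a + b - 1) with ((a - 1) + b) by ring.
    rewrite <- IH, scal_sum, decomp_sum by lia; simpl pred.
    rewrite !Rmult_0_l, Rplus_0_l; apply sum_eq; intros v Hv.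
    replace (S N - S v)%nat with (N - v)%nat by lia.
    rewrite binomR_succ_absorb; ring.
  - replace (a + b - 1) with (a + (b - 1)) by ring.
    rewrite <- IH, scal_sum, tech5, Nat.sub_diag, INR_0.
    rewrite !Rmult_0_l, Rplus_0_r; apply sum_eq; intros v Hv.
    replace (S N - v)%nat with (S (N - v)) by lia.
    transitivity (binomR a v * (INR (S (N - v)) * binomR b (S (N - v)))); [ring|].
    rewrite binomR_succ_absorb; ring.
Qed.

Lemma binomR_nat N k : (k <= N)%nat -> binomR (INR N) k = Binomial.C N k.
Proof.
  intro Hk; unfold binomR, Binomial.C; rewrite fallR_nat by exact Hk.
  field; split; apply INR_fact_neq_0.
Qed.

Lemma binomR_nat_sym N k : (k <= N)%nat -> binomR (INR N) k = binomR (INR N) (N - k).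
Proof. intro Hk; rewrite !binomR_nat by lia; now apply pascal_step1. Qed.

Lemma binomR_nat_succ N : binomR (INR N) (S N) = 0.
Proof. unfold binomR; simpl fallR; rewrite Rminus_diag; unfold Rdiv; ring. Qed.

Lemma binomR_opp_mul a n v : (v <= n)%nat ->
  binomR (- a) v * binomR (INR n + a - 1) (n - v)
  = (-1) ^ v * Binomial.C n v * binomR (INR n + a - 1) n.
Proof.
  intro Hv; unfold binomR, Binomial.C; rewrite fallR_opp.
  assert (Hsplit : fallR (INR n + a - 1) n
    = fallR (INR n + a - 1) (n - v) * fallR (INR n + a - 1 - INR (n - v)) v)
    by (rewrite <- fallR_add; f_equal; lia).
  rewrite Hsplit, minus_INR by exact Hv.
  replace (INR n + a - 1 - (INR n - INR v)) with (a + INR v - 1) by ring.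
  field; repeat split; apply INR_fact_neq_0.
Qed.

(** * Polynomials over C *)

Definition Cpoly (c : nat -> R) (N : nat) (z : C) : C :=
  Csum (fun v => Cmult (RtoC (c v)) (Cnpow z v)) N.

Definition Cpoly_deriv (c : nat -> R) (N : nat) (z : C) : C :=
  Csum (fun v => Cmult (RtoC (c v)) (Cmult (RtoC (INR v)) (Cnpow z (pred v)))) N.

Lemma Csum_ext f g N : (forall v, (v <= N)%nat -> f v = g v) -> Csum f N = Csum g N.
Proof.
  induction N as [|N IH]; intro H; simpl; [apply H; lia|].
  rewrite IH by (intros; apply H; lia); rewrite H by lia; reflexivity.
Qed.

Lemma Csum_scal a f N : Csum (fun v => Cmult a (f v)) N = Cmult a (Csum f N).
Proof. induction N as [|N IH]; simpl; [reflexivity|]; rewrite IH; ring. Qed.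

Lemma Csum_plus f g N : Csum (fun v => Cplus (f v) (g v)) N = Cplus (Csum f N) (Csum g N).
Proof. induction N as [|N IH]; simpl; [reflexivity|]; rewrite IH; ring. Qed.

Lemma Csum_succ_l f N : Csum f (S N) = Cplus (f O) (Csum (fun v => f (S v)) N).
Proof.
  induction N as [|N IH]; [reflexivity|].
  change (Csum f (S (S N))) with (Cplus (Csum f (S N)) (f (S (S N)))).
  rewrite IH; simpl; ring.
Qed.

Lemma Cnpow_1 k : Cnpow (RtoC 1) k = RtoC 1.
Proof. induction k as [|k IH]; simpl; [reflexivity|]; rewrite IH; ring. Qed.

Lemma Cnpow_mult a b k : Cnpow (Cmult a b) k = Cmult (Cnpow a k) (Cnpow b k).
Proof. induction k as [|k IH]; simpl; [ring|]; rewrite IH; ring. Qed.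

Lemma Cnpow_RtoC t k : Cnpow (RtoC t) k = RtoC (t ^ k).
Proof. induction k as [|k IH]; simpl; [reflexivity|]; now rewrite IH, RtoC_mult. Qed.

Lemma Cpoly_ext c c' N z : (forall v, (v <= N)%nat -> c v = c' v) -> Cpoly c N z = Cpoly c' N z.
Proof. intro H; apply Csum_ext; intros v Hv; now rewrite H. Qed.

Lemma Cpoly_scal a c N z : Cpoly (fun v => a * c v) N z = Cmult (RtoC a) (Cpoly c N z).
Proof.
  unfold Cpoly; rewrite <- Csum_scal; apply Csum_ext; intros v _.
  rewrite RtoC_mult; ring.
Qed.

Lemma Cpoly_at_1 c N : Cpoly c N (RtoC 1) = RtoC (sum_f_R0 c N).
Proof.
  unfold Cpoly; induction N as [|N IH]; simpl; [now rewrite Cmult_1_r|].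
  rewrite IH, Cnpow_1, RtoC_plus; ring.
Qed.

Lemma Cpoly_euler a c N z :
  Cplus (Cmult (RtoC a) (Cpoly c N z)) (Cmult z (Cpoly_deriv c N z))
  = Cpoly (fun v => (a + INR v) * c v) N z.
Proof.
  unfold Cpoly, Cpoly_deriv; rewrite <- !Csum_scal, <- Csum_plus.
  apply Csum_ext; intros [|v] _.
  - rewrite INR_0, Rplus_0_r, RtoC_mult; ring.
  - change (Cnpow z (S v)) with (Cmult z (Cnpow z v)); simpl pred.
    rewrite RtoC_mult, RtoC_plus; ring.
Qed.

Lemma Cpoly_deriv_0 c z : Cpoly_deriv c 0 z = RtoC 0.
Proof. unfold Cpoly_deriv; simpl; ring. Qed.

Lemma Cpoly_deriv_succ c N z :
  Cpoly_deriv c (S N) z = Cpoly (fun v => INR (S v) * c (S v)) N z.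
Proof.
  unfold Cpoly_deriv, Cpoly; rewrite Csum_succ_l, INR_0.
  replace (Cmult (RtoC (c O)) (Cmult (RtoC 0) (Cnpow z (pred 0)))) with (RtoC 0) by ring.
  rewrite Cplus_0_l; apply Csum_ext; intros v _; simpl pred.
  rewrite RtoC_mult; ring.
Qed.

Lemma Cpoly_mul_1_minus c N z :
  Cmult (Cminus (RtoC 1) z) (Cpoly c N z)
  = Cminus (Cpoly (fun v => c v - match v with O => 0 | S u => c u end) N z)
           (Cmult (RtoC (c N)) (Cnpow z (S N))).
Proof.
  unfold Cpoly; induction N as [|N IH]; [simpl; rewrite RtoC_minus; ring|].
  change (Csum ?f (S N)) with (Cplus (Csum f N) (f (S N))); cbv beta.
  rewrite Cmult_plus_distr_l, IH, RtoC_minus.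
  change (Cnpow z (S (S N))) with (Cmult z (Cnpow z (S N))); ring.
Qed.

Lemma Cnpow_1_minus n z :
  Cnpow (Cminus (RtoC 1) z) n = Cpoly (fun v => (-1) ^ v * binomR (INR n) v) n z.
Proof.
  induction n as [|n IH].
  - unfold Cpoly; simpl; rewrite binomR_0; apply injective_projections; simpl; ring.
  - change (Cnpow (Cminus (RtoC 1) z) (S n))
      with (Cmult (Cminus (RtoC 1) z) (Cnpow (Cminus (RtoC 1) z) n)).
    set (c := fun v => (-1) ^ v * binomR (INR n) v) in IH.
    assert (Hc : c (S n) = 0) by (unfold c; rewrite binomR_nat_succ; ring).
    assert (Hext : Cpoly c n z = Cpoly c (S n) z).
    { unfold Cpoly; change (Csum ?f (S n)) with (Cplus (Csum f n) (f (S n))).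
      cbv beta; rewrite Hc; ring. }
    rewrite IH, Hext, Cpoly_mul_1_minus, Hc, Cmult_0_l.
    unfold Cminus; rewrite Copp_0, Cplus_0_r.
    apply Cpoly_ext; intros [|v] _; unfold c.
    + simpl; rewrite !binomR_0; ring.
    + rewrite S_INR, binomR_pascal; simpl pow; ring.
Qed.

(** * Derivatives of complex-valued functions of a real variable *)

(* Close a goal [P l'] from [H : P l], leaving the side goal [l = l'] (normalized to an
   equation over [R] when it is one). *)
Ltac derive_from H :=
  lazymatch goal with |- ?P ?l => refine (eq_ind _ P H l _) end;
  try lazymatch goal with |- @eq _ ?a ?b =>
    change (@eq R a b); unfold minus, plus, opp, scal; simpl; unfold mult; simpl end.

Definition is_derive_C (f : R -> C) (r : R) (l : C) : Prop :=
  is_derive (fun t => fst (f t)) r (fst l) /\ is_derive (fun t => snd (f t)) r (snd l).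

Lemma is_derive_C_continuous f r l : is_derive_C f r l ->
  continuity_pt (fun t => fst (f t)) r /\ continuity_pt (fun t => snd (f t)) r.
Proof.
  intros [H1 H2]; split; apply continuity_pt_filterlim;
    apply (ex_derive_continuous (V := R_NormedModule)); eexists; eassumption.
Qed.

Lemma is_derive_C_const (c : C) r : is_derive_C (fun _ => c) r (RtoC 0).
Proof. split; exact (is_derive_const _ r). Qed.

Lemma is_derive_C_plus f g r a b : is_derive_C f r a -> is_derive_C g r b ->
  is_derive_C (fun t => Cplus (f t) (g t)) r (Cplus a b).
Proof.
  intros [Hf1 Hf2] [Hg1 Hg2]; split.
  - derive_from (is_derive_plus _ _ r _ _ Hf1 Hg1); reflexivity.
  - derive_from (is_derive_plus _ _ r _ _ Hf2 Hg2); reflexivity.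
Qed.

Lemma is_derive_C_minus f g r a b : is_derive_C f r a -> is_derive_C g r b ->
  is_derive_C (fun t => Cminus (f t) (g t)) r (Cminus a b).
Proof.
  intros [Hf1 Hf2] [Hg1 Hg2]; split; simpl.
  - derive_from (is_derive_minus _ _ r _ _ Hf1 Hg1); reflexivity.
  - derive_from (is_derive_minus _ _ r _ _ Hf2 Hg2); reflexivity.
Qed.

Lemma is_derive_C_mult f g r a b : is_derive_C f r a -> is_derive_C g r b ->
  is_derive_C (fun t => Cmult (f t) (g t)) r (Cplus (Cmult a (g r)) (Cmult (f r) b)).
Proof.
  intros [Hf1 Hf2] [Hg1 Hg2]; split; simpl.
  - derive_from (is_derive_minus _ _ r _ _
      (Derive.is_derive_mult _ _ r _ _ Hf1 Hg1) (Derive.is_derive_mult _ _ r _ _ Hf2 Hg2)).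
    simpl; ring.
  - derive_from (is_derive_plus _ _ r _ _
      (Derive.is_derive_mult _ _ r _ _ Hf1 Hg2) (Derive.is_derive_mult _ _ r _ _ Hf2 Hg1)).
    simpl; ring.
Qed.

Lemma is_derive_C_Csum (F : nat -> R -> C) dF N r :
  (forall v, is_derive_C (F v) r (dF v)) ->
  is_derive_C (fun t => Csum (fun v => F v t) N) r (Csum dF N).
Proof.
  intro H; induction N as [|N IH]; simpl; [apply H|].
  now apply is_derive_C_plus.
Qed.

Lemma is_derive_C_Cnpow f r a k : is_derive_C f r a ->
  is_derive_C (fun t => Cnpow (f t) k) r
    (Cmult (RtoC (INR k)) (Cmult a (Cnpow (f r) (pred k)))).
Proof.
  intro Hf; induction k as [|k IH].
  - derive_from (is_derive_C_const (RtoC 1) r); rewrite INR_0; ring.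
  - derive_from (is_derive_C_mult _ _ r _ _ Hf IH).
    destruct k as [|k]; simpl pred; simpl Cnpow.
    + rewrite INR_0, INR_1; ring.
    + rewrite (S_INR (S k)), RtoC_plus; ring.
Qed.

Lemma is_derive_zero_const_01 (h : R -> R) :
  (forall s, 0 <= s <= 1 -> is_derive h s 0) -> forall r, 0 <= r <= 1 -> h r = h 0.
Proof.
  intros Hh r Hr.
  destruct (MVT_gen h 0 r (fun _ => 0)) as [c [_ Hc]]; [| |lra];
    rewrite Rmin_left, Rmax_right by lra; intros s Hs.
  - apply Hh; lra.
  - apply continuity_pt_filterlim, (ex_derive_continuous (V := R_NormedModule)).
    eexists; apply Hh; lra.
Qed.

Lemma is_derive_C_eq_on_01 (f g : R -> C) :
  (forall r, 0 <= r <= 1 -> exists d, is_derive_C f r d /\ is_derive_C g r d) ->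
  f 0 = g 0 -> forall r, 0 <= r <= 1 -> f r = g r.
Proof.
  intros Hd H0 r Hr.
  assert (E1 : fst (f r) - fst (g r) = fst (f 0) - fst (g 0)).
  { apply (is_derive_zero_const_01 (fun t => fst (f t) - fst (g t))); [|exact Hr].
    intros s Hs; destruct (Hd s Hs) as [d [[A _] [B _]]].
    derive_from (is_derive_minus _ _ s _ _ A B); ring. }
  assert (E2 : snd (f r) - snd (g r) = snd (f 0) - snd (g 0)).
  { apply (is_derive_zero_const_01 (fun t => snd (f t) - snd (g t))); [|exact Hr].
    intros s Hs; destruct (Hd s Hs) as [d [[_ A] [_ B]]].
    derive_from (is_derive_minus _ _ s _ _ A B); ring. }
  rewrite H0 in E1, E2; apply injective_projections; lra.
Qed.

Lemma is_derive_C_Cpoly (g : R -> C) dg c N r : is_derive_C g r dg ->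
  is_derive_C (fun t => Cpoly c N (g t)) r (Cmult dg (Cpoly_deriv c N (g r))).
Proof.
  intro Hg; unfold Cpoly, Cpoly_deriv; rewrite <- Csum_scal.
  apply (is_derive_C_Csum (fun v t => Cmult (RtoC (c v)) (Cnpow (g t) v))); intro v.
  derive_from (is_derive_C_mult _ _ r _ _ (is_derive_C_const (RtoC (c v)) r)
                 (is_derive_C_Cnpow _ _ _ v Hg)); ring.
Qed.

(** * The principal power along a segment *)

(* The complement of the closed half-line (-oo, 0], on which [Arg] is smooth. *)
Definition in_slit_plane (z : C) : Prop := 0 < fst z \/ snd z <> 0.

Lemma atan_inv_neg y : y < 0 -> atan (/ y) = - (PI / 2) - atan y.
Proof.
  intro Hy; replace (/ y) with (- / (- y)) by (field; lra).
  rewrite atan_opp, atan_inv by lra; rewrite atan_opp; ring.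
Qed.

Lemma Arg_re_pos z : 0 < fst z -> Arg z = atan (snd z / fst z).
Proof. intro H; unfold Arg, Re, Im; destruct (Rlt_dec 0 (fst z)); [reflexivity|lra]. Qed.

Lemma Arg_im_pos z : 0 < snd z -> Arg z = PI / 2 - atan (fst z / snd z).
Proof.
  intro H; unfold Arg, Re, Im.
  destruct (Rlt_dec 0 (fst z)); [|destruct (Rlt_dec (fst z) 0)].
  - replace (snd z / fst z) with (/ (fst z / snd z)) by (field; lra).
    apply atan_inv, Rdiv_lt_0_compat; lra.
  - destruct (Rle_dec 0 (snd z)); [|lra].
    replace (snd z / fst z) with (/ (fst z / snd z)) by (field; lra).
    rewrite atan_inv_neg by (apply Rdiv_neg_pos; lra); lra.
  - destruct (Rlt_dec 0 (snd z)); [|lra].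
    replace (fst z) with 0 by lra; unfold Rdiv; rewrite Rmult_0_l, atan_0; ring.
Qed.

Lemma Arg_im_neg z : snd z < 0 -> Arg z = - (PI / 2) - atan (fst z / snd z).
Proof.
  intro H; unfold Arg, Re, Im.
  destruct (Rlt_dec 0 (fst z)); [|destruct (Rlt_dec (fst z) 0)].
  - replace (snd z / fst z) with (/ (fst z / snd z)) by (field; lra).
    apply atan_inv_neg, Rdiv_pos_neg; lra.
  - destruct (Rle_dec 0 (snd z)); [lra|].
    replace (snd z / fst z) with (/ (fst z / snd z)) by (field; lra).
    rewrite atan_inv by (apply Rdiv_neg_neg; lra); lra.
  - destruct (Rlt_dec 0 (snd z)); [lra|]; destruct (Rlt_dec (snd z) 0); [|lra].
    replace (fst z) with 0 by lra; unfold Rdiv; rewrite Rmult_0_l, atan_0; ring.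
Qed.

Lemma sqrt_sum_sq_factor a b : b <> 0 -> sqrt (a ^ 2 + b ^ 2) = Rabs b * sqrt (1 + (a / b)²).
Proof.
  intro Hb.
  replace (a ^ 2 + b ^ 2) with (b² * (1 + (a / b)²)) by (unfold Rsqr; field; exact Hb).
  rewrite sqrt_mult, sqrt_Rsqr_abs by (pose proof (Rle_0_sqr (a / b)); apply Rle_0_sqr || lra).
  reflexivity.
Qed.

Lemma Cmod_cos_sin_Arg z : in_slit_plane z ->
  Cmod z * cos (Arg z) = fst z /\ Cmod z * sin (Arg z) = snd z.
Proof.
  intro Hz; unfold Cmod.
  assert (Hs : forall t, 0 < sqrt (1 + t²))
    by (intro t; apply sqrt_lt_R0; pose proof (Rle_0_sqr t); lra).
  destruct (Rlt_dec 0 (fst z)) as [Ha|Ha].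
  - rewrite Arg_re_pos, Rplus_comm, sqrt_sum_sq_factor, cos_atan, sin_atan, Rabs_right by lra.
    pose proof (Hs (snd z / fst z)); split; field; lra.
  - destruct Hz as [Hz|Hz]; [lra|].
    rewrite sqrt_sum_sq_factor by exact Hz; pose proof (Hs (fst z / snd z)).
    destruct (Rlt_dec 0 (snd z)).
    + rewrite Arg_im_pos, cos_minus, sin_minus, cos_PI2, sin_PI2, cos_atan, sin_atan,
        Rabs_right by lra.
      split; field; lra.
    + rewrite Arg_im_neg by lra.
      replace (- (PI / 2) - atan (fst z / snd z)) with (- (PI / 2 + atan (fst z / snd z))) by ring.
      rewrite cos_neg, sin_neg, cos_plus, sin_plus, cos_PI2, sin_PI2, cos_atan, sin_atan,
        Rabs_left by lra.
      split; field; lra.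
Qed.

Lemma in_slit_plane_neq_0 z : in_slit_plane z -> z <> RtoC 0.
Proof. intros [H|H] E; subst z; simpl in H; lra. Qed.

Lemma Cpowr_succ z a : in_slit_plane z -> Cpowr z (a + 1) = Cmult z (Cpowr z a).
Proof.
  intro Hz; destruct (Cmod_cos_sin_Arg z Hz) as [Hc Hs].
  assert (Hm : 0 < Cmod z) by (apply Cmod_gt_0, in_slit_plane_neq_0, Hz).
  unfold Cpowr.
  replace ((a + 1) * ln (Cmod z)) with (a * ln (Cmod z) + ln (Cmod z)) by ring.
  replace ((a + 1) * Arg z) with (a * Arg z + Arg z) by ring.
  rewrite exp_plus, exp_ln, cos_plus, sin_plus by exact Hm.
  apply injective_projections; simpl; rewrite <- Hc, <- Hs; ring.
Qed.

Lemma Cpowr_1 a : Cpowr (RtoC 1) a = RtoC 1.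
Proof.
  unfold Cpowr, Cmod, Arg, Re, Im; simpl.
  replace (1 * (1 * 1) + 0 * (0 * 1)) with 1 by ring; rewrite sqrt_1, ln_1.
  destruct (Rlt_dec 0 1); [|lra]; unfold Rdiv; rewrite Rmult_0_l, atan_0.
  rewrite !Rmult_0_r, exp_0, cos_0, sin_0; apply injective_projections; simpl; ring.
Qed.

Lemma continuous_locally_pos (f : R -> R) r :
  continuous f r -> 0 < f r -> locally r (fun t => 0 < f t).
Proof. intros Hf Hr; apply (Hf (fun y => 0 < y)), open_gt, Hr. Qed.

Lemma continuous_locally_neg (f : R -> R) r :
  continuous f r -> f r < 0 -> locally r (fun t => f t < 0).
Proof. intros Hf Hr; apply (Hf (fun y => y < 0)), open_lt, Hr. Qed.

Lemma Cdiv_fst u z : fst (Cdiv u z) = (fst z * fst u + snd z * snd u) / (fst z ^ 2 + snd z ^ 2).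
Proof. unfold Cdiv, Cinv; simpl; unfold Rdiv; ring. Qed.

Lemma Cdiv_snd u z : snd (Cdiv u z) = (fst z * snd u - snd z * fst u) / (fst z ^ 2 + snd z ^ 2).
Proof. unfold Cdiv, Cinv; simpl; unfold Rdiv; ring. Qed.

Section Segment.
Variable x : C.
Let w := Cminus x (RtoC 1).

Lemma seg_0 : seg x 0 = RtoC 1.
Proof. unfold seg; apply injective_projections; simpl; ring. Qed.

Lemma seg_1 : seg x 1 = x.
Proof. unfold seg; apply injective_projections; simpl; ring. Qed.

Lemma seg_fst t : fst (seg x t) = 1 + t * fst w.
Proof. unfold seg, w; simpl; ring. Qed.

Lemma seg_snd t : snd (seg x t) = t * snd w.
Proof. unfold seg, w; simpl; ring. Qed.

Lemma is_derive_C_seg r : is_derive_C (seg x) r w.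
Proof.
  split; [apply (is_derive_ext (fun t => 1 + t * fst w)) | apply (is_derive_ext (fun t => t * snd w))];
    try (intro t; symmetry; apply seg_fst || apply seg_snd);
    auto_derive; auto; unfold w; simpl; ring.
Qed.

Lemma in_slit_plane_seg : (forall s, 0 <= s <= 1 -> seg x s <> RtoC 0) ->
  forall s, 0 <= s <= 1 -> in_slit_plane (seg x s).
Proof.
  intros Hz s Hs; unfold in_slit_plane; rewrite seg_fst, seg_snd.
  destruct (Req_dec (snd w) 0) as [H0|H0]; [left|].
  - (* on the real axis the segment would pass through 0 at [s = 1 / (1 - x)] *)
    destruct (Rlt_dec 0 (1 + s * fst w)) as [Hp|Hp]; [exact Hp|exfalso].
    apply Rnot_lt_le in Hp.
    assert (Hw0 : fst w < 0) by nra.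
    assert (Hw1 : fst w <= -1) by (assert (fst w * (1 - s) <= 0) by nra; nra).
    apply (Hz (/ (- fst w))).
    + split; [apply Rlt_le, Rinv_0_lt_compat; lra|].
      rewrite <- Rinv_1; apply Rinv_le_contravar; lra.
    + apply injective_projections; [rewrite seg_fst | rewrite seg_snd, H0];
        change (fst (RtoC 0)) with 0; change (snd (RtoC 0)) with 0; field; lra.
  - destruct (Req_dec s 0) as [->|Hs0]; [left; lra|right].
    now apply Rmult_integral_contrapositive.
Qed.

Section SlitPoint.
Variable r : R.
Hypothesis Hr : in_slit_plane (seg x r).
Let z := seg x r.

Lemma seg_norm2_pos : 0 < fst z ^ 2 + snd z ^ 2.
Proof.
  unfold z; destruct Hr as [H|H]; [nra|].
  assert (0 < snd z ^ 2) by (apply pow2_gt_0; exact H); nra.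
Qed.

Lemma is_derive_ln_Cmod_seg : is_derive (fun t => ln (Cmod (seg x t))) r (fst (Cdiv w z)).
Proof.
  pose proof seg_norm2_pos as Hp.
  apply (is_derive_ext (fun t => ln (sqrt ((1 + t * fst w) ^ 2 + (t * snd w) ^ 2)))).
  { intro t; unfold Cmod; now rewrite seg_fst, seg_snd. }
  rewrite Cdiv_fst; unfold z in *; rewrite !seg_fst, !seg_snd in *.
  set (a := fst w) in *; set (b := snd w) in *; clearbody a b.
  auto_derive; [repeat split; try nra; apply sqrt_lt_R0; nra|].
  set (N := (1 + r * a) * ((1 + r * a) * 1) + r * b * (r * b * 1)).
  assert (HN : sqrt N * sqrt N = N) by (apply sqrt_sqrt; unfold N; nra).
  assert (0 < sqrt N) by (apply sqrt_lt_R0; unfold N; nra).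
  replace ((1 + r * a) ^ 2 + (r * b) ^ 2) with (sqrt N * sqrt N) by (rewrite HN; unfold N; ring).
  field; lra.
Qed.

Lemma is_derive_Arg_seg : is_derive (fun t => Arg (seg x t)) r (snd (Cdiv w z)).
Proof.
  assert (Hcont : forall c d, continuous (fun t => c + t * d) r)
    by (intros c d; apply (ex_derive_continuous (V := R_NormedModule)); auto_derive; auto).
  pose proof seg_norm2_pos as Hp; pose proof Hr as Hr'; unfold in_slit_plane in Hr'.
  rewrite Cdiv_snd; unfold z in *; rewrite !seg_fst, !seg_snd in *.
  destruct (Rlt_dec 0 (1 + r * fst w)) as [Ha|Ha];
    [|destruct Hr' as [Hr'|Hr']; [lra|]; destruct (Rlt_dec 0 (r * snd w)) as [Hb|Hb]].
  - apply (is_derive_ext_loc (fun t => atan ((t * snd w) / (1 + t * fst w)))).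
    { apply (filter_imp (fun t => 0 < 1 + t * fst w));
        [|exact (continuous_locally_pos _ r (Hcont 1 (fst w)) Ha)].
      intros t Ht; rewrite Arg_re_pos, seg_fst, seg_snd; [reflexivity|now rewrite seg_fst]. }
    set (a := fst w) in *; set (b := snd w) in *; clearbody a b.
    auto_derive; [lra|]; field; repeat split; intro; nra.
  - apply (is_derive_ext_loc (fun t => PI / 2 - atan ((1 + t * fst w) / (t * snd w)))).
    { apply (filter_imp (fun t => 0 < 0 + t * snd w));
        [|exact (continuous_locally_pos _ r (Hcont 0 (snd w)) ltac:(lra))].
      intros t Ht; rewrite Arg_im_pos, seg_fst, seg_snd; [reflexivity|rewrite seg_snd; lra]. }
    set (a := fst w) in *; set (b := snd w) in *; clearbody a b.
    auto_derive; [lra|]; field; repeat split; intro; nra.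
  - apply (is_derive_ext_loc (fun t => - (PI / 2) - atan ((1 + t * fst w) / (t * snd w)))).
    { apply (filter_imp (fun t => 0 + t * snd w < 0));
        [|exact (continuous_locally_neg _ r (Hcont 0 (snd w)) ltac:(lra))].
      intros t Ht; rewrite Arg_im_neg, seg_fst, seg_snd; [reflexivity|rewrite seg_snd; lra]. }
    set (a := fst w) in *; set (b := snd w) in *; clearbody a b.
    auto_derive; [lra|]; field; repeat split; intro; nra.
Qed.

Lemma is_derive_C_Cpowr_seg a :
  is_derive_C (fun t => Cpowr (seg x t) a) r
    (Cmult (RtoC a) (Cmult w (Cpowr z (a - 1)))).
Proof.
  assert (Hz : z <> RtoC 0) by exact (in_slit_plane_neq_0 _ Hr).
  assert (HP : Cpowr z a = Cmult z (Cpowr z (a - 1))).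
  { rewrite <- Cpowr_succ by exact Hr; f_equal; ring. }
  assert (Hexp := fun y => proj2 (is_derive_Reals exp y _) (derivable_pt_lim_exp y)).
  assert (Hcos := fun y => proj2 (is_derive_Reals cos y _) (derivable_pt_lim_cos y)).
  assert (Hsin := fun y => proj2 (is_derive_Reals sin y _) (derivable_pt_lim_sin y)).
  assert (HE := is_derive_comp exp _ r _ _ (Hexp _) (is_derive_scal _ r a _ is_derive_ln_Cmod_seg)).
  assert (HA := is_derive_scal _ r a _ is_derive_Arg_seg).
  (* d/dt z(t)^a = a (z'/z) z^a, with z'/z = w/z the derivative of ln|z| + i Arg z *)
  enough (Hd : is_derive_C (fun t => Cpowr (seg x t) a) r
                 (Cmult (RtoC a) (Cmult (Cdiv w z) (Cpowr z a)))).
  { derive_from Hd; rewrite HP; field; exact Hz. }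
  split; simpl.
  - derive_from (Derive.is_derive_mult _ _ r _ _ HE (is_derive_comp cos _ r _ _ (Hcos _) HA)).
    fold z; ring.
  - derive_from (Derive.is_derive_mult _ _ r _ _ HE (is_derive_comp sin _ r _ _ (Hsin _) HA)).
    fold z; ring.
Qed.

End SlitPoint.
End Segment.

(** * Integrals against the kernel (u - r)^m *)

Lemma continuity_2d_pt_sub_pow m x y : continuity_2d_pt (fun u v => (v - u) ^ m) x y.
Proof.
  induction m as [|m IH]; simpl; [apply continuity_2d_pt_const|].
  apply continuity_2d_pt_mult; [|exact IH].
  apply continuity_2d_pt_minus; [apply continuity_2d_pt_id2|apply continuity_2d_pt_id1].
Qed.

Section KernelIntegral.
Variable psi : R -> R.
Hypothesis psi_cont : forall u, continuity_pt psi u.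

Definition kernel_integral (m : nat) (r : R) : R := RInt (fun u => (u - r) ^ m * psi u) 0 r.

Lemma continuity_pt_kernel m r u : continuity_pt (fun t => (t - r) ^ m * psi t) u.
Proof.
  apply continuity_pt_mult; [|apply psi_cont].
  apply continuity_pt_filterlim, (ex_derive_continuous (V := R_NormedModule)); auto_derive; auto.
Qed.

Lemma ex_RInt_kernel m r a b : ex_RInt (fun t => (t - r) ^ m * psi t) a b.
Proof.
  apply (ex_RInt_continuous (V := R_CompleteNormedModule)); intros u _.
  apply continuity_pt_filterlim, continuity_pt_kernel.
Qed.

Lemma kernel_integral_at_0 m : kernel_integral m 0 = 0.
Proof. apply (RInt_point (V := R_CompleteNormedModule)). Qed.

Lemma is_derive_kernel_integral_0 r : is_derive (kernel_integral 0) r (psi r).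
Proof.
  apply (is_derive_ext (fun r => RInt psi 0 r)).
  { intro t; unfold kernel_integral; apply RInt_ext; intros; simpl; ring. }
  apply (is_derive_RInt psi (fun r => RInt psi 0 r) 0 r).
  - apply filter_forall; intro b; apply (RInt_correct (V := R_CompleteNormedModule)).
    apply (ex_RInt_continuous (V := R_CompleteNormedModule)); intros.
    apply continuity_pt_filterlim, psi_cont.
  - apply continuity_pt_filterlim, psi_cont.
Qed.

Lemma is_derive_kernel_param m u v :
  is_derive (fun y => (v - y) ^ S m * psi v) u (- INR (S m) * (v - u) ^ m * psi v).
Proof.
  auto_derive; auto.
  change (match m with O => 1 | S _ => INR m + 1 end) with (INR (S m)); unfold Rminus; ring.
Qed.

Lemma continuity_2d_pt_kernel_param_deriv m y t :
  continuity_2d_pt (fun u v => Derive (fun z => (v - z) ^ S m * psi v) u) y t.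
Proof.
  apply (continuity_2d_pt_ext (fun u v => - INR (S m) * (v - u) ^ m * psi v)).
  { intros; symmetry; apply is_derive_unique, is_derive_kernel_param. }
  apply continuity_2d_pt_mult; [apply continuity_2d_pt_mult|].
  - apply continuity_2d_pt_const.
  - apply continuity_2d_pt_sub_pow.
  - apply (continuity_1d_2d_pt_comp psi (fun _ v => v)); [apply psi_cont|apply continuity_2d_pt_id2].
Qed.

Lemma is_derive_kernel_integral_succ m r :
  is_derive (kernel_integral (S m)) r (- INR (S m) * kernel_integral m r).
Proof.
  assert (Hd := is_derive_kernel_param m).
  assert (Hc := continuity_2d_pt_kernel_param_deriv m).
  (* Leibniz rule: the boundary term vanishes because the kernel is 0 at u = r *)
  assert (Hleibniz := is_derive_RInt_param_bound_comp (fun y t => (t - y) ^ S m * psi t)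
     (fun _ => 0) (fun r => r) r 0 1).
  lazymatch goal with |- ?P ?l => refine (eq_ind _ P (Hleibniz _ _ _ _ _ _ _ _ _ _ _) l _) end.
  all: try (apply filter_forall; intros; apply ex_RInt_kernel).
  all: try (exists (mkposreal 1 Rlt_0_1); apply filter_forall; intros; apply ex_RInt_kernel).
  all: try (apply locally_2d_forall; intros; apply Hc).
  all: try apply continuity_pt_kernel.
  - exact (is_derive_const _ r).
  - exact (is_derive_id r).
  - exists (mkposreal 1 Rlt_0_1); apply filter_forall; intros y t _; eexists; apply Hd.
  - intros t _; apply Hc.
  - change (@eq R (RInt (fun t => Derive (fun u => (t - u) ^ S m * psi t) r) 0 r
        + - ((0 - r) ^ S m * psi 0) * 0 + (r - r) ^ S m * psi r * 1)
      (- INR (S m) * kernel_integral m r)).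
    rewrite Rminus_diag, pow_ne_zero by lia; rewrite !Rmult_0_l, Rmult_0_r, !Rplus_0_r.
    transitivity (RInt (fun u => scal (- INR (S m)) ((u - r) ^ m * psi u)) 0 r).
    + apply RInt_ext; intros t _.
      transitivity (- INR (S m) * (t - r) ^ m * psi t);
        [exact (is_derive_unique _ _ _ (Hd r t)) | exact (Rmult_assoc _ _ _)].
    + rewrite (RInt_scal (V := R_CompleteNormedModule)) by apply ex_RInt_kernel; reflexivity.
Qed.

End KernelIntegral.

Lemma kernel_integral_lin_comb f g c1 c2 m r :
  (forall u, continuity_pt f u) -> (forall u, continuity_pt g u) ->
  kernel_integral (fun u => c1 * f u + c2 * g u) m r
  = c1 * kernel_integral f m r + c2 * kernel_integral g m r.
Proof.
  intros Hf Hg; unfold kernel_integral.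
  transitivity (RInt (fun u => plus (scal c1 ((u - r) ^ m * f u)) (scal c2 ((u - r) ^ m * g u))) 0 r).
  { apply RInt_ext; intros; unfold plus, scal; simpl; unfold mult; simpl; ring. }
  rewrite (RInt_plus (V := R_CompleteNormedModule))
    by (apply (ex_RInt_scal (V := R_CompleteNormedModule)), ex_RInt_kernel; assumption).
  rewrite !(RInt_scal (V := R_CompleteNormedModule)) by (apply ex_RInt_kernel; assumption).
  reflexivity.
Qed.

(* Clamping to [0, 1] extends a function continuous on [0, 1] to one continuous on R. *)
Definition clamp01 (u : R) : R := Rmax 0 (Rmin 1 u).

Lemma clamp01_range u : 0 <= clamp01 u <= 1.
Proof. unfold clamp01, Rmax, Rmin; repeat destruct Rle_dec; lra. Qed.

Lemma clamp01_id u : 0 <= u <= 1 -> clamp01 u = u.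
Proof. intro Hu; unfold clamp01, Rmax, Rmin; repeat destruct Rle_dec; lra. Qed.

Lemma clamp01_continuous u : continuity_pt clamp01 u.
Proof.
  intros eps Heps; exists eps; split; [exact Heps|]; intros v [_ Hv]; simpl in *.
  unfold R_dist in *; eapply Rle_lt_trans; [|exact Hv].
  unfold clamp01, Rmax, Rmin; repeat destruct Rle_dec; unfold Rabs; repeat destruct Rcase_abs; lra.
Qed.

Definition kernel_integral_C (g : R -> C) (m : nat) (r : R) : C :=
  (kernel_integral (fun u => fst (g u)) m r, kernel_integral (fun u => snd (g u)) m r).

Lemma kernel_integral_C_ext g h m r : (forall u, g u = h u) ->
  kernel_integral_C g m r = kernel_integral_C h m r.
Proof.
  intro Hgh; unfold kernel_integral_C, kernel_integral.
  f_equal; apply RInt_ext; intros u _; now rewrite Hgh.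
Qed.

Section KernelIntegralC.
Variable g : R -> C.
Hypothesis g_cont : forall u, continuity_pt (fun t => fst (g t)) u /\ continuity_pt (fun t => snd (g t)) u.

Lemma kernel_integral_C_at_0 m : kernel_integral_C g m 0 = RtoC 0.
Proof. unfold kernel_integral_C; now rewrite !kernel_integral_at_0. Qed.

Lemma is_derive_C_kernel_integral_C_0 r : is_derive_C (kernel_integral_C g 0) r (g r).
Proof. split; apply is_derive_kernel_integral_0; intro u; apply g_cont. Qed.

Lemma is_derive_C_kernel_integral_C_succ m r :
  is_derive_C (kernel_integral_C g (S m)) r
    (Cmult (RtoC (- INR (S m))) (kernel_integral_C g m r)).
Proof.
  split; [derive_from (is_derive_kernel_integral_succ (fun u => fst (g u)) (fun u => proj1 (g_cont u)) m r)
         |derive_from (is_derive_kernel_integral_succ (fun u => snd (g u)) (fun u => proj2 (g_cont u)) m r)];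
    simpl; ring.
Qed.

Lemma kernel_integral_C_scal c m r :
  kernel_integral_C (fun u => Cmult c (g u)) m r = Cmult c (kernel_integral_C g m r).
Proof.
  assert (Hlin : forall c1 c2, kernel_integral (fun u => c1 * fst (g u) + c2 * snd (g u)) m r
    = c1 * kernel_integral (fun u => fst (g u)) m r + c2 * kernel_integral (fun u => snd (g u)) m r)
    by (intros; apply kernel_integral_lin_comb; intro u; apply g_cont).
  unfold kernel_integral_C; apply injective_projections; simpl.
  - transitivity (kernel_integral (fun u => fst c * fst (g u) + - snd c * snd (g u)) m r);
      [apply RInt_ext; intros; simpl; ring | rewrite Hlin; ring].
  - transitivity (kernel_integral (fun u => snd c * fst (g u) + fst c * snd (g u)) m r);
      [apply RInt_ext; intros; simpl; ring | rewrite Hlin; ring].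
Qed.

Lemma is_RInt_kernel_integral_C m r :
  is_RInt (V := C_R_NormedModule) (fun u => Cmult (RtoC ((u - r) ^ m)) (g u)) 0 r
    (kernel_integral_C g m r).
Proof.
  apply is_RInt_fct_extend_pair; simpl;
    [apply (is_RInt_ext (fun u => (u - r) ^ m * fst (g u))) |
     apply (is_RInt_ext (fun u => (u - r) ^ m * snd (g u)))];
    try (intros; simpl; ring);
    apply (RInt_correct (V := R_CompleteNormedModule)), ex_RInt_kernel; intro u; apply g_cont.
Qed.

End KernelIntegralC.

(** * The remainder z^alpha q(z) - p(z) as a contour integral *)

Section PadeRemainder.
Variables (x : C) (n : nat) (beta : R).
Hypothesis x_slit : forall s, 0 <= s <= 1 -> in_slit_plane (seg x s).

Let w := Cminus x (RtoC 1).

(* The [alpha] of the theorem at order [m = k]: the integrand exponent [alpha - k - 1] is [beta]. *)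
Definition pade_exponent (k : nat) : R := beta + INR k + 1.

Definition q_coef (k v : nat) : R :=
  binomR (INR k - pade_exponent k) v * binomR (INR n + pade_exponent k) (n - v).

Definition p_coef (k v : nat) : R :=
  binomR (INR k - pade_exponent k) (k - v) * binomR (INR n + pade_exponent k) v.

Definition pade_remainder (k : nat) (r : R) : C :=
  let z := seg x r in
  Cminus (Cmult (Cpowr z (pade_exponent k)) (q_poly k n (pade_exponent k) z))
         (p_poly k n (pade_exponent k) z).

Definition pade_const (k : nat) : R :=
  pade_exponent k * binomR (INR k - pade_exponent k) k * binomR (INR n + pade_exponent k) n.

(* On the segment [t - z = (u - r) w]: [kernel_integral_C] supplies the factor [(u - r)^k] of
   [(t - z)^k], and [integrand] the rest, including [dt = w du]. *)
Definition integrand (k : nat) (u : R) : C :=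
  Cmult (Cnpow w k)
        (Cmult (Cmult (Cnpow (Cminus (RtoC 1) (seg x u)) n) (Cpowr (seg x u) beta)) w).

Definition pade_integral (k : nat) (r : R) : C :=
  kernel_integral_C (fun u => integrand k (clamp01 u)) k r.

Lemma pade_remainder_Cpoly k r : pade_remainder k r =
  Cminus (Cmult (Cpowr (seg x r) (pade_exponent k)) (Cpoly (q_coef k) n (seg x r)))
         (Cpoly (p_coef k) k (seg x r)).
Proof. reflexivity. Qed.

Lemma is_derive_C_pade_remainder k r : 0 <= r <= 1 ->
  is_derive_C (pade_remainder k) r
    (Cmult w (Cminus (Cmult (Cpowr (seg x r) (pade_exponent k - 1))
                            (Cpoly (fun v => (pade_exponent k + INR v) * q_coef k v) n (seg x r)))
                     (Cpoly_deriv (p_coef k) k (seg x r)))).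
Proof.
  intro Hr.
  assert (HP := Cpowr_succ (seg x r) (pade_exponent k - 1) (x_slit r Hr)).
  replace (pade_exponent k - 1 + 1) with (pade_exponent k) in HP by ring.
  assert (Hseg := is_derive_C_seg x r).
  derive_from (is_derive_C_minus _ _ r _ _
    (is_derive_C_mult _ _ r _ _ (is_derive_C_Cpowr_seg x r (x_slit r Hr) (pade_exponent k))
       (is_derive_C_Cpoly _ _ (q_coef k) n r Hseg))
    (is_derive_C_Cpoly _ _ (p_coef k) k r Hseg)).
  rewrite <- Cpoly_euler; fold (q_poly k n (pade_exponent k) (seg x r)).
  unfold w in *; rewrite HP; ring.
Qed.


Lemma pade_remainder_deriv_0 r :
  Cmult w (Cminus (Cmult (Cpowr (seg x r) (pade_exponent 0 - 1))
                         (Cpoly (fun v => (pade_exponent 0 + INR v) * q_coef 0 v) n (seg x r)))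
                  (Cpoly_deriv (p_coef 0) 0 (seg x r)))
  = Cmult (RtoC (pade_const 0)) (integrand 0 r).
Proof.
  rewrite Cpoly_deriv_0.
  replace (pade_exponent 0 - 1) with beta by (unfold pade_exponent; rewrite INR_0; ring).
  set (Y := INR n + pade_exponent 0).
  assert (Hcoef : forall v, (v <= n)%nat ->
    (pade_exponent 0 + INR v) * q_coef 0 v = Y * binomR (Y - 1) n * ((-1) ^ v * binomR (INR n) v)).
  { intros v Hv; unfold q_coef; rewrite INR_0, Rminus_0_l; fold Y.
    transitivity (binomR (- pade_exponent 0) v * ((Y - INR (n - v)) * binomR Y (n - v))).
    { rewrite minus_INR by exact Hv; unfold Y; ring. }
    rewrite binomR_sub_absorb.
    replace (Y - 1) with (INR n + pade_exponent 0 - 1) by (unfold Y; ring).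
    transitivity (Y * (binomR (- pade_exponent 0) v * binomR (INR n + pade_exponent 0 - 1) (n - v)));
      [ring|].
    rewrite binomR_opp_mul, binomR_nat by exact Hv; ring. }
  rewrite (Cpoly_ext _ _ _ _ Hcoef), Cpoly_scal, <- Cnpow_1_minus.
  replace (pade_const 0) with (Y * binomR (Y - 1) n).
  - unfold integrand; simpl Cnpow; ring.
  - unfold pade_const, Y; rewrite binomR_0, <- binomR_sub_absorb.
    replace (INR n + pade_exponent 0 - INR n) with (pade_exponent 0) by ring; ring.
Qed.

Lemma pade_exponent_succ k : pade_exponent (S k) = pade_exponent k + 1.
Proof. unfold pade_exponent; rewrite S_INR; ring. Qed.

Lemma pade_remainder_deriv_succ k r :
  Cmult w (Cminus (Cmult (Cpowr (seg x r) (pade_exponent (S k) - 1))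
              (Cpoly (fun v => (pade_exponent (S k) + INR v) * q_coef (S k) v) n (seg x r)))
            (Cpoly_deriv (p_coef (S k)) (S k) (seg x r)))
  = Cmult w (Cmult (RtoC (INR n + pade_exponent (S k))) (pade_remainder k r)).
Proof.
  assert (Hbase : INR (S k) - pade_exponent (S k) = INR k - pade_exponent k)
    by (rewrite pade_exponent_succ, S_INR; ring).
  assert (Htop : INR n + pade_exponent k = INR n + pade_exponent (S k) - 1)
    by (rewrite pade_exponent_succ; ring).
  rewrite Cpoly_deriv_succ, pade_exponent_succ at 1; rewrite Rplus_minus_r.
  rewrite (Cpoly_ext (fun v => (pade_exponent (S k) + INR v) * q_coef (S k) v)
                     (fun v => (INR n + pade_exponent (S k)) * q_coef k v)).
  rewrite (Cpoly_ext (fun v => INR (S v) * p_coef (S k) (S v))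
                     (fun v => (INR n + pade_exponent (S k)) * p_coef k v)).
  - rewrite !Cpoly_scal, pade_remainder_Cpoly; ring.
  - intros v Hv; unfold p_coef; rewrite Hbase, Htop, Nat.sub_succ.
    transitivity (binomR (INR k - pade_exponent k) (k - v)
                  * (INR (S v) * binomR (INR n + pade_exponent (S k)) (S v))); [ring|].
    rewrite binomR_succ_absorb; ring.
  - intros v Hv; unfold q_coef; rewrite Hbase, Htop.
    transitivity (binomR (INR k - pade_exponent k) v
      * ((INR n + pade_exponent (S k) - INR (n - v)) * binomR (INR n + pade_exponent (S k)) (n - v))).
    { rewrite minus_INR by exact Hv; ring. }
    rewrite binomR_sub_absorb; ring.
Qed.

Lemma pade_const_succ k :
  (INR n + pade_exponent (S k)) * pade_const k = - INR (S k) * pade_const (S k).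
Proof.
  unfold pade_const.
  transitivity (- pade_exponent (S k) * binomR (INR n + pade_exponent (S k)) n *
                (INR (S k) * binomR (INR (S k) - pade_exponent (S k)) (S k))); [|ring].
  rewrite binomR_succ.
  replace (INR (S k) - pade_exponent (S k)) with (INR k - pade_exponent k)
    by (rewrite pade_exponent_succ, S_INR; ring).
  replace (INR k - pade_exponent k - INR k) with (- pade_exponent k) by ring.
  transitivity (pade_exponent k * binomR (INR k - pade_exponent k) k
    * ((INR n + pade_exponent (S k) - INR n) * binomR (INR n + pade_exponent (S k)) n));
    [|replace (INR n + pade_exponent (S k) - INR n) with (pade_exponent (S k)) by ring; ring].
  rewrite binomR_sub_absorb.
  replace (INR n + pade_exponent (S k) - 1) with (INR n + pade_exponent k)
    by (rewrite pade_exponent_succ; ring).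
  ring.
Qed.

Lemma pade_remainder_at_0 k : pade_remainder k 0 = RtoC 0.
Proof.
  rewrite pade_remainder_Cpoly, seg_0, Cpowr_1, !Cpoly_at_1.
  assert (Hq : sum_f_R0 (q_coef k) n = binomR (INR (k + n)) n).
  { unfold q_coef; rewrite binomR_vandermonde, plus_INR; f_equal; ring. }
  assert (Hp : sum_f_R0 (p_coef k) k = binomR (INR (k + n)) k).
  { transitivity (sum_f_R0 (fun v => binomR (INR n + pade_exponent k) v
                                     * binomR (INR k - pade_exponent k) (k - v)) k).
    - apply sum_eq; intros; unfold p_coef; ring.
    - rewrite binomR_vandermonde, plus_INR; f_equal; ring. }
  rewrite Hq, Hp, (binomR_nat_sym (k + n) n) by lia.
  replace (k + n - n)%nat with k by lia; ring.
Qed.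

Lemma ex_is_derive_C_integrand k u : 0 <= u <= 1 -> exists l, is_derive_C (integrand k) u l.
Proof.
  intro Hu; eexists.
  exact (is_derive_C_mult _ _ _ _ _ (is_derive_C_const (Cnpow w k) _)
    (is_derive_C_mult _ _ _ _ _
      (is_derive_C_mult _ _ _ _ _
        (is_derive_C_Cnpow _ _ _ n
          (is_derive_C_minus _ _ _ _ _ (is_derive_C_const (RtoC 1) _) (is_derive_C_seg x _)))
        (is_derive_C_Cpowr_seg x _ (x_slit _ Hu) beta))
      (is_derive_C_const w _))).
Qed.

Lemma integrand_clamp01_continuous k u :
  continuity_pt (fun t => fst (integrand k (clamp01 t))) u /\
  continuity_pt (fun t => snd (integrand k (clamp01 t))) u.
Proof.
  destruct (ex_is_derive_C_integrand k (clamp01 u) (clamp01_range u)) as [l Hd].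
  destruct (is_derive_C_continuous _ _ _ Hd) as [H1 H2].
  split; apply (continuity_pt_comp clamp01 (fun t => _ (integrand k t)));
    auto using clamp01_continuous.
Qed.

Lemma pade_integral_at_0 k : pade_integral k 0 = RtoC 0.
Proof. exact (kernel_integral_C_at_0 _ k). Qed.

Lemma is_derive_C_pade_integral_0 r : 0 <= r <= 1 ->
  is_derive_C (pade_integral 0) r (integrand 0 r).
Proof.
  intro Hr; rewrite <- (clamp01_id r Hr) at 2.
  exact (is_derive_C_kernel_integral_C_0 _ (integrand_clamp01_continuous 0) r).
Qed.

Lemma is_derive_C_pade_integral_succ k r :
  is_derive_C (pade_integral (S k)) r
    (Cmult (RtoC (- INR (S k))) (Cmult w (pade_integral k r))).
Proof.
  derive_from (is_derive_C_kernel_integral_C_succ _ (integrand_clamp01_continuous (S k)) k r).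
  unfold pade_integral; rewrite <- (kernel_integral_C_scal _ (integrand_clamp01_continuous k)).
  f_equal; apply kernel_integral_C_ext; intro u; unfold integrand; simpl Cnpow; ring.
Qed.

Lemma pade_remainder_eq_integral k r : 0 <= r <= 1 ->
  pade_remainder k r = Cmult (RtoC (pade_const k)) (pade_integral k r).
Proof.
  revert r; induction k as [|k IH]; apply is_derive_C_eq_on_01;
    try (rewrite pade_remainder_at_0, pade_integral_at_0; ring);
    intros r Hr.
  - exists (Cmult (RtoC (pade_const 0)) (integrand 0 r)); split.
    + derive_from (is_derive_C_pade_remainder 0 r Hr); apply pade_remainder_deriv_0.
    + derive_from (is_derive_C_mult _ _ r _ _ (is_derive_C_const (RtoC (pade_const 0)) r)
                     (is_derive_C_pade_integral_0 r Hr)); ring.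
  - exists (Cmult w (Cmult (RtoC (INR n + pade_exponent (S k))) (pade_remainder k r))); split.
    + derive_from (is_derive_C_pade_remainder (S k) r Hr); apply pade_remainder_deriv_succ.
    + derive_from (is_derive_C_mult _ _ r _ _ (is_derive_C_const (RtoC (pade_const (S k))) r)
                     (is_derive_C_pade_integral_succ k r)).
      rewrite IH by exact Hr.
      transitivity (Cmult w (Cmult (RtoC ((INR n + pade_exponent (S k)) * pade_const k))
                                   (pade_integral k r)));
        [rewrite pade_const_succ | ]; rewrite RtoC_mult; ring.
Qed.

End PadeRemainder.

Lemma pade_integral_at_1 x n beta m : (forall s, 0 <= s <= 1 -> in_slit_plane (seg x s)) ->
  pade_integral x n beta m 1
  = seg_integral (fun t => Cmult (Cmult (Cnpow (Cminus t x) m) (Cnpow (Cminus (RtoC 1) t) n))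
                                 (Cpowr t beta)) x.
Proof.
  intro Hslit; symmetry; apply (is_RInt_unique (V := C_R_CompleteNormedModule)).
  apply (is_RInt_ext (V := C_R_NormedModule)
    (fun u => Cmult (RtoC ((u - 1) ^ m)) (integrand x n beta m (clamp01 u)))).
  2: { apply is_RInt_kernel_integral_C; intro u; apply integrand_clamp01_continuous, Hslit. }
  intros s Hs; rewrite Rmin_left, Rmax_right in Hs by lra.
  rewrite clamp01_id by lra; unfold integrand.
  replace (Cminus (seg x s) x) with (Cmult (RtoC (s - 1)) (Cminus x (RtoC 1)))
    by (unfold seg; apply injective_projections; simpl; ring).
  rewrite Cnpow_mult, Cnpow_RtoC.
  lazymatch goal with |- ?a = ?b => change (@eq C a b) end; ring.
Qed.

Theorem lemma2p2 (m n : nat) (alpha : R) (x : C) :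
  (0 < m)%nat -> (0 < n)%nat ->
  (forall s : R, 0 <= s <= 1 -> seg x s <> RtoC 0) ->
  Cminus (Cmult (Cpowr x alpha) (q_poly m n alpha x)) (p_poly m n alpha x)
  = Cmult (RtoC (alpha * binomR (INR m - alpha) m * binomR (INR n + alpha) n))
      (seg_integral
         (fun t => Cmult (Cmult (Cnpow (Cminus t x) m) (Cnpow (Cminus (RtoC 1) t) n))
                         (Cpowr t (alpha - INR m - 1)))
         x).
Proof.
  intros _ _ Hx.
  assert (Hslit := in_slit_plane_seg x Hx).
  assert (Halpha : pade_exponent (alpha - INR m - 1) m = alpha)
    by (unfold pade_exponent; ring).
  assert (Hpade := pade_remainder_eq_integral x n (alpha - INR m - 1) Hslit m 1 ltac:(lra)).
  unfold pade_remainder, pade_const in Hpade; cbv zeta in Hpade.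
  rewrite Halpha, seg_1, pade_integral_at_1 in Hpade by exact Hslit.
  exact Hpade.
Qed.
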